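(* Let $k\ge 2$ and $n_1,\dots,n_k\ge 1$, let $n=n_1+\cdots+n_k$, and let $\Gamma=K_{1,k-1}[K_{n_1},K_{n_2},\dots,K_{n_k}]$, where $K_{n_1}$ replaces the center of the star $K_{1,k-1}$ and $K_{n_2},\dots,K_{n_k}$ replace its leaves. Put $d_1=n-1$ and $d_i=n_1+n_i-1$ for $2\le i\le k$. Then \[\chi(S(\Gamma),x)=\prod_{i=1}^{k}\left(x+\sqrt{2}d_i\right)^{n_i-1}\left(\prod_{i=1}^{k}\big(x-(n_i-1)\sqrt{2}d_i\big)-\sum_{j=2}^{k}n_1n_j(d_1^2+d_j^2)\prod_{\substack{2\le i\le k\\ i\neq j}}\big(x-(n_i-1)\sqrt{2}d_i\big)\right),\] where $\chi(M,x)=\det(xI-M)$ and $S(\Gamma)$ is the Sombor matrix of $\Gamma$.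
   Context: All graphs are finite, simple and undirected. For a graph $\Gamma$ with vertices $u_1,\dots,u_m$, the Sombor matrix $S(\Gamma)$ is the $m\times m$ matrix whose $(i,j)$ entry is $\sqrt{\deg(u_i)^2+\deg(u_j)^2}$ if $u_i$ and $u_j$ are adjacent and $0$ otherwise. $K_r$ is the complete graph on $r$ vertices and $K_{1,k-1}$ is the star with center $u_1$ and leaves $u_2,\dots,u_k$. For a graph $H$ with vertices $u_1,\dots,u_k$ and pairwise disjoint graphs $\Gamma_1,\dots,\Gamma_k$, the generalized join $H[\Gamma_1,\dots,\Gamma_k]$ is obtained by replacing each $u_i$ by $\Gamma_i$ and joining every vertex of $\Gamma_i$ to every vertex of $\Gamma_j$ whenever $u_i$ is adjacent to $u_j$ in $H$. *)

From HB Require Import structures.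
From mathcomp Require Import all_boot all_order all_algebra.
From mathcomp Require Import reals.
Set Implicit Arguments. Unset Strict Implicit. Unset Printing Implicit Defensive.
Import Order.TTheory GRing.Theory Num.Theory.
Local Open Scope ring_scope.

Definition gdeg (T : finType) (adj : rel T) (x : T) : nat := #|[set y | adj x y]|.

Definition sombor_mx (R : realType) (T : finType) (adj : rel T) : 'M[R]_#|T| :=
  \matrix_(i, j)
    (if adj (enum_val i) (enum_val j)
     then Num.sqrt (((gdeg adj (enum_val i)) ^ 2)%:R + ((gdeg adj (enum_val j)) ^ 2)%:R)
     else 0).

Definition complete_adj (r : nat) : rel 'I_r := fun x y => x != y.

Definition star_adj (k : nat) : rel 'I_k :=
  fun i j => (i != j) && ((val i == 0%N) || (val j == 0%N)).

(* generalized join H[G_1,...,G_k] : vertices are pairs (i, v) with v a vertex of G_i *)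
Definition gjoin_adj (k : nat) (H : rel 'I_k) (T : 'I_k -> finType)
  (G : forall i, rel (T i)) : rel {i : 'I_k & T i} :=
  fun x y => if tag y == tag x then G (tag x) (tagged x) (tagged_as x y)
             else H (tag x) (tag y).

From HB Require Import structures.
From mathcomp Require Import all_boot all_order all_algebra.
From mathcomp Require Import reals.
From mathcomp Require Import ring.
Import Order.TTheory GRing.Theory Num.Theory.
Local Open Scope ring_scope.

(* Off its zero diagonal, the Sombor matrix S of Γ has entries depending only on
   the blocks of the two vertices: S = E B E^T - diag(B_ii) for the block incidence
   matrix E and a k x k matrix B with B_ii = √2 d_i, B_1j = B_j1 = √(d_1² + d_j²),
   and zeros elsewhere.  Sylvester's identity det(1 - XY) = det(1 - YX) turns
   det(xI - S) into Π (x + √2 d_i)^(n_i) · det(I - diag(n_i / (x + √2 d_i)) B),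
   an arrowhead determinant, computed by clearing its first column.  Both sides of
   the claimed identity are polynomials agreeing at every large x, hence equal. *)

Lemma poly_eq_gt (R : realDomainType) (p q : {poly R}) (M : R) :
  (forall x, M < x -> p.[x] = q.[x]) -> p = q.
Proof.
move=> pq; apply/eqP; rewrite -subr_eq0; apply/eqP.
apply: (@roots_geq_poly_eq0 _ _ [seq M + i.+1%:R | i <- iota 0 (size (p - q))]).
- by apply/allP => _ /mapP[i _ ->]; rewrite /root !hornerE pq ?subrr // ltrDl ltr0Sn.
- by rewrite map_inj_uniq ?iota_uniq // => i j /addrI /eqP; rewrite eqr_nat => /eqP [].
- by rewrite size_map size_iota.
Qed.

Lemma horner_char_poly (R : comNzRingType) m (A : 'M[R]_m) x :
  (char_poly A).[x] = \det (x%:M - A).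
Proof.
rewrite /char_poly -[LHS]/(horner_eval x _) -det_map_mx; congr (\det _).
by apply/matrixP => i j; rewrite !mxE /= horner_evalE hornerD hornerN hornerMn hornerX hornerC.
Qed.

Lemma det_1sub_mulmxC (R : comPzRingType) m p (X : 'M[R]_(m, p)) (Y : 'M[R]_(p, m)) :
  \det (1%:M - X *m Y) = \det (1%:M - Y *m X).
Proof.
have eL : block_mx 1%:M X Y 1%:M = block_mx 1%:M 0 Y 1%:M *m block_mx 1%:M X 0 (1%:M - Y *m X).
  by rewrite mulmx_block !mul1mx !mul0mx !mulmx1 !addr0 addrC subrK.
have eU : block_mx 1%:M X Y 1%:M = block_mx (1%:M - X *m Y) X 0 1%:M *m block_mx 1%:M 0 Y 1%:M.
  by rewrite mulmx_block !mul1mx !mul0mx !mulmx1 !mulmx0 !add0r subrK.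
have := congr1 determinant (etrans (esym eL) eU).
by rewrite !det_mulmx det_lblock !det_ublock !det1 !mul1r !mulr1.
Qed.

Lemma det_arrowhead (R : fieldType) K (A : 'M[R]_K.+1) :
  (forall i j, i != j -> i != ord0 -> j != ord0 -> A i j = 0) ->
  (forall i, i != ord0 -> A i i != 0) ->
  \det A = (A 0 0 - \sum_(i | i != ord0) A 0 i * A i 0 / A i i) *
           \prod_(i | i != ord0) A i i.
Proof.
move=> A_arrow A_diag.
pose schur r := \sum_(s | s != ord0) A r s * A s 0 / A s s.
have schur_row r : r != ord0 -> schur r = A r 0.
  move=> r0; rewrite /schur (bigD1 r) //= big1 ?addr0 => [|s /andP[s0 sr]].
    by rewrite mulrAC mulfV ?A_diag ?mul1r.
  by rewrite A_arrow ?mul0r // eq_sym.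
(* [A *m (1 - N)] clears the first column of A below the diagonal. *)
pose N : 'M[R]_K.+1 := \matrix_(i, j) (((j == ord0) && (i != ord0))%:R * (A i 0 / A i i)).
have AUE r c : (A *m (1%:M - N)) r c = A r c - (c == ord0)%:R * schur r.
  rewrite mulmxBr mulmx1 !mxE mulr_sumr; congr (_ - _).
  rewrite [RHS]big_mkcond; apply: eq_bigr => s _; rewrite mxE.
  by case: (c == ord0); case: (s != ord0); rewrite ?mul0r ?mulr0 ?mul1r ?mulrA.
have lt_neq (i j : 'I_K.+1) : (i < j)%N -> i != j /\ j != ord0.
  move=> ltij; rewrite -!(inj_eq val_inj) /= !neq_ltn ltij.
  by rewrite (leq_ltn_trans (leq0n i) ltij) orbT.
have detU : \det (1%:M - N) = 1.
  rewrite det_trig; last first.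
    apply/is_trig_mxP => i j /lt_neq[ij j0].
    by rewrite !mxE (negbTE ij) (negbTE j0) mul0r subr0.
  by rewrite big1 // => i _; rewrite !mxE eqxx andbN mul0r subr0.
have -> : \det A = \det (A *m (1%:M - N)) by rewrite det_mulmx detU mulr1.
rewrite -det_tr det_trig; last first.
  apply/is_trig_mxP => i j /lt_neq[ij j0]; rewrite mxE AUE.
  case: (eqVneq i ord0) => [->|i0]; first by rewrite schur_row // mul1r subrr.
  by rewrite mul0r subr0 A_arrow // eq_sym.
rewrite (bigD1 ord0) //= mxE AUE eqxx mul1r; congr (_ * _).
by apply: eq_bigr => i i0; rewrite mxE AUE (negbTE i0) mul0r subr0.
Qed.

Section Blowup.
Variables (R : fieldType) (m K : nat) (t : 'I_m -> 'I_K).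

Local Notation fibre_card i := #|t @^-1: [set i]|.

Lemma prod_fibres (F : 'I_K -> R) : \prod_v F (t v) = \prod_i F i ^+ fibre_card i.
Proof.
rewrite (partition_big t xpredT) //=; apply: eq_bigr => i _.
rewrite -prodr_const; apply: eq_big => [v|v /eqP-> //]; by rewrite !inE.
Qed.

Let E : 'M[R]_(m, K) := \matrix_(v, i) (t v == i)%:R.

Let mulEmx p (C : 'M[R]_(K, p)) v j : (E *m C) v j = C (t v) j.
Proof.
rewrite mxE (bigD1 (t v)) //= mxE eqxx mul1r big1 ?addr0 // => i ti.
by rewrite mxE eq_sym (negbTE ti) mul0r.
Qed.

Let mulmxEt p (C : 'M[R]_(p, K)) i w : (C *m E^T) i w = C i (t w).
Proof.
rewrite mxE (bigD1 (t w)) //= !mxE eqxx mulr1 big1 ?addr0 // => j tj.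
by rewrite !mxE eq_sym (negbTE tj) mulr0.
Qed.

Lemma det_blowup (B : 'M[R]_K) (S : 'M[R]_m) (x : R) :
    (forall v w, S v w = (v != w)%:R * B (t v) (t w)) ->
    (forall i, x + B i i != 0) ->
  \det (x%:M - S) = \prod_i (x + B i i) ^+ fibre_card i *
    \det (1%:M - diag_mx (\row_i ((fibre_card i)%:R / (x + B i i))) *m B).
Proof.
move=> SE y_neq0.
(* [x - S = Y (1 - Y^-1 E B E^T)], and [E^T Y^-1 E] is diagonal. *)
pose Y : 'M[R]_m := diag_mx (\row_v (x + B (t v) (t v))).
pose Yinv : 'M[R]_m := diag_mx (\row_v (x + B (t v) (t v))^-1).
have YYinv : Y *m Yinv = 1%:M.
  apply/matrixP => v w; rewrite mul_mx_diag !mxE.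
  by case: (eqVneq v w) => [->|_]; rewrite ?mulr1n ?mulr0n ?mul0r ?mulfV ?y_neq0.
have EBE v w : (E *m B *m E^T) v w = B (t v) (t w) by rewrite mulmxEt mulEmx.
have -> : x%:M - S = Y *m (1%:M - (Yinv *m E *m B) *m E^T).
  rewrite mulmxBr mulmx1 !mulmxA YYinv mul1mx.
  move: (E *m B *m E^T) EBE => C CE; apply/matrixP => v w; rewrite !mxE SE CE.
  case: (eqVneq v w) => [->|_]; first by rewrite mulr1n mul0r subr0 addrK.
  by rewrite mul1r !mulr0n sub0r.
rewrite det_mulmx det_1sub_mulmxC det_diag !mulmxA; congr (_ * \det (1%:M - _ *m B)).
  by under eq_bigr do rewrite mxE; rewrite (prod_fibres (fun i => x + B i i)).
apply/matrixP => i j; rewrite -mulmxA mxE.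
transitivity (\sum_(v in t @^-1: [set i]) (x + B i i)^-1 *+ (i == j)).
  rewrite [RHS]big_mkcond; apply: eq_bigr => v _; rewrite mul_diag_mx !mxE !inE.
  by case: (eqVneq (t v) i) => [->|_]; rewrite ?mul1r ?mulr_natr ?mul0r.
by rewrite sumr_const !mxE -mulrnA mulnC mulrnA -[_ *+ #|_|]mulr_natl mulrC.
Qed.
End Blowup.

Lemma gdeg_gjoin k (H : rel 'I_k) (T : 'I_k -> finType) (G : forall i, rel (T i))
    i (v : T i) :
  irreflexive H ->
  gdeg (gjoin_adj H G) (Tagged T v) = (gdeg (G i) v + \sum_(j | H i j) #|T j|)%N.
Proof.
move=> H_irr; rewrite /gdeg -!sum1dep_card.
pose adj_v j (w : T j) := gjoin_adj H G (Tagged T v) (Tagged T w).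
transitivity (\sum_j \sum_(w | adj_v j w) 1)%N.
  by rewrite (sig_big_dep xpredT adj_v (fun _ _ => 1%N)); apply: eq_bigl => -[].
rewrite (bigD1 i) //=; congr (_ + _)%N.
  by apply: eq_bigl => w; rewrite /adj_v /gjoin_adj /= eqxx tagged_asE.
rewrite [RHS]big_mkcond [RHS](bigD1 i) //= H_irr add0n.
apply: eq_bigr => j ji; rewrite /adj_v /gjoin_adj /= (negbTE ji).
by case: (H i j); rewrite ?big_pred0_eq // sum1_card; apply: eq_card.
Qed.

Lemma card_tag_preimset (I : finType) (T : I -> finType) (i : I) :
  #|(fun v => tag (enum_val v)) @^-1: [set i] : {set 'I_#|{: {j : I & T j}}|}| = #|T i|.
Proof.
transitivity #|@enum_val _ {: {j : I & T j}} @^-1: (tag @^-1: [set i])|.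
  by apply: eq_card => v; rewrite !inE.
rewrite on_card_preimset; last exact/onW_bij/enum_val_bij.
rewrite -[RHS]sum1_card -sum1dep_card.
rewrite -(@big_pred1_eq _ 0%N addn _ i (fun j => \sum_(w in T j) 1)%N).
rewrite (sig_big_dep (pred1 i) (fun _ => xpredT) (fun _ _ => 1%N)) /=.
by apply: eq_bigl => z; rewrite inE andbT.
Qed.

Lemma gdeg_complete r (v : 'I_r) : gdeg (@complete_adj r) v = r.-1.
Proof.
rewrite /gdeg -[r in RHS]card_ord -(cardsC1 v); apply: eq_card => w.
by rewrite !inE /complete_adj eq_sym.
Qed.

Section CompleteJoin.
Variables (k : nat) (H : rel 'I_k) (n : 'I_k -> nat).
Hypothesis H_irr : irreflexive H.

Local Notation join := (gjoin_adj H (fun i => @complete_adj (n i))).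

Definition join_deg (i : 'I_k) : nat := ((n i).-1 + \sum_(j | H i j) n j)%N.

Lemma gdeg_join_complete (x : {i : 'I_k & 'I_(n i)}) : gdeg join x = join_deg (tag x).
Proof.
case: x => i v; rewrite gdeg_gjoin // gdeg_complete /join_deg.
by under eq_bigr do rewrite card_ord.
Qed.

Definition join_quotient_mx (R : realType) : 'M[R]_k :=
  \matrix_(i, j) (if (i == j) || H i j
                  then Num.sqrt (((join_deg i) ^ 2)%:R + ((join_deg j) ^ 2)%:R) else 0).

Lemma sombor_join_complete (R : realType) v w :
  sombor_mx R join v w =
  (v != w)%:R * join_quotient_mx R (tag (enum_val v)) (tag (enum_val w)).
Proof.
rewrite /sombor_mx !mxE !gdeg_join_complete -(inj_eq enum_val_inj).
case: (enum_val v) (enum_val w) => [i a] [j b]; rewrite /gjoin_adj -tag_eqE /tag_eq /=.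
case: (eqVneq j i) => [ji|_] /=; last by case: (H i j); rewrite ?mul1r ?mulr0.
subst j; rewrite !tagged_asE /complete_adj.
by case: (a != b); rewrite ?mul1r ?mul0r.
Qed.

End CompleteJoin.

Arguments join_deg {k} H n i.
Arguments join_quotient_mx {k} H n R.

Lemma mulr_sub_sum_div_prod (R : fieldType) (I : finType) (P : pred I) (a w : I -> R) b :
    (forall i, P i -> a i != 0) ->
  (b - \sum_(i | P i) w i / a i) * \prod_(i | P i) a i =
  b * \prod_(i | P i) a i - \sum_(j | P j) w j * \prod_(i | P i && (i != j)) a i.
Proof.
move=> a_neq0; rewrite mulrBl mulr_suml; congr (_ - _); apply: eq_bigr => j Pj.
by rewrite (bigD1 j) //= mulrA divfK ?a_neq0.
Qed.

Lemma big_nat1_ord (R : Type) (idx : R) (op : Monoid.law idx) K (P : pred nat) (F : nat -> R) :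
  \big[op/idx]_(1 <= i < K.+1 | P i) F i = \big[op/idx]_(i < K.+1 | (i != ord0) && P i) F i.
Proof. by rewrite big_geq_mkord; apply: eq_bigl => i; rewrite andbC lt0n. Qed.

Definition star_join_deg (k : nat) (n : nat -> nat) (i : nat) : nat :=
  if i == 0%N then (\sum_(j < k) n j - 1)%N else (n 0%N + n i - 1)%N.

Section StarJoin.
Variables (R : realType) (k : nat) (n : nat -> nat).
Hypothesis n_gt0 : forall i, (i < k.+1)%N -> (0 < n i)%N.

Local Notation d := (star_join_deg k.+1 n).

Lemma star_adj_irr : irreflexive (@star_adj k.+1).
Proof. by move=> i; rewrite /star_adj eqxx. Qed.

Lemma join_deg_star (i : 'I_k.+1) : join_deg (@star_adj k.+1) (fun i => n i) i = d i.
Proof.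
rewrite /join_deg /star_join_deg.
case: (eqVneq (i : nat) 0%N) => [i0|i0].
  have -> : i = ord0 by apply: val_inj.
  rewrite [in RHS](bigD1 ord0) //= (eq_bigl (fun j => j != ord0)) => [|j]; last first.
    by rewrite /star_adj /= andbT eq_sym.
  by rewrite -subn1 addnBAC // n_gt0.
rewrite (big_pred1 ord0) => [|j] /=; last first.
  rewrite /star_adj (negbTE i0) /= -[j == ord0]/(j == 0 :> nat).
  case: (eqVneq (j : nat) 0%N) => [j0|_]; rewrite ?andbF // andbT.
  by apply/eqP => ij; move: i0; rewrite ij j0 eqxx.
by rewrite addnC -subn1 addnBA // n_gt0.
Qed.

Local Notation Q := (join_quotient_mx (@star_adj k.+1) (fun i => n i) R).

Lemma star_quotientE i j :
  Q i j = if (i == j) || star_adj i j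
          then Num.sqrt (((d i) ^ 2)%:R + ((d j) ^ 2)%:R) else 0.
Proof. by rewrite mxE !join_deg_star. Qed.

Lemma star_quotient_diag i : Q i i = Num.sqrt 2 * (d i)%:R.
Proof.
rewrite star_quotientE eqxx /= natrX -mulr2n -[_ *+ 2]mulr_natr.
by rewrite sqrtrM ?exprn_ge0 // sqrtr_sqr ger0_norm // mulrC.
Qed.

Lemma star_quotient_off i j : i != j -> i != ord0 -> j != ord0 -> Q i j = 0.
Proof.
move=> ij i0 j0; rewrite star_quotientE /star_adj (negbTE ij) /=.
by rewrite -[i == 0 :> nat]/(i == ord0) -[j == 0 :> nat]/(j == ord0) (negbTE i0) (negbTE j0).
Qed.

Lemma star_quotient_spoke j : j != ord0 -> Q ord0 j * Q j ord0 = (d 0%N ^ 2 + d j ^ 2)%:R.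
Proof.
move=> j0; rewrite !star_quotientE /star_adj /= eq_sym (negbTE j0) /= orbT.
by rewrite [in X in _ * X]addrC -expr2 sqr_sqrtr ?addr_ge0 ?ler0n // natrD.
Qed.

Lemma det_star_quotient (q h : 'I_k.+1 -> R) :
    (forall i, 1 - q i * Q i i = h i) -> (forall i, i != ord0 -> h i != 0) ->
  \det (1%:M - diag_mx (\row_i q i) *m Q) =
    (h ord0 - \sum_(i | i != ord0) q ord0 * q i * (d 0%N ^ 2 + d i ^ 2)%:R / h i) *
    \prod_(i | i != ord0) h i.
Proof.
move=> hE h_neq0.
have AE i j : (1%:M - diag_mx (\row_i q i) *m Q) i j = (i == j)%:R - q i * Q i j.
  by rewrite mul_diag_mx !mxE.
rewrite det_arrowhead => [|i j ij i0 j0|i i0]; first last.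
- by rewrite AE eqxx mulr1n hE h_neq0.
- by rewrite AE star_quotient_off // (negbTE ij) mulr0 subr0.
rewrite !AE eqxx mulr1n hE; congr ((_ - _) * _).
  apply: eq_bigr => i i0; rewrite !AE eqxx mulr1n hE eq_sym (negbTE i0) !sub0r mulrNN.
  by rewrite mulrACA star_quotient_spoke.
by apply: eq_bigr => i _; rewrite AE eqxx mulr1n hE.
Qed.

Local Notation star_join :=
  (gjoin_adj (@star_adj k.+1) (fun i : 'I_k.+1 => @complete_adj (n i))).

Lemma det_sombor_star_join_quotient (x : R) :
    (forall i : 'I_k.+1, x + Num.sqrt 2 * (d i)%:R != 0) ->
  \det (x%:M - sombor_mx R star_join) =
  \prod_(i < k.+1) (x + Num.sqrt 2 * (d i)%:R) ^+ n i *
  \det (1%:M - diag_mx (\row_i ((n i)%:R / (x + Num.sqrt 2 * (d i)%:R))) *m Q).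
Proof.
move=> y_neq0.
rewrite (det_blowup _ _ _ (fun v => tag (enum_val v)) Q) => [|v w|i]; first last.
- by rewrite star_quotient_diag.
- by rewrite sombor_join_complete //; apply: star_adj_irr.
under eq_bigr do rewrite card_tag_preimset card_ord star_quotient_diag.
congr (_ * \det (1%:M - diag_mx _ *m Q)); apply/rowP => i.
by rewrite mxE [RHS]mxE card_tag_preimset card_ord star_quotient_diag.
Qed.

Lemma det_sombor_star_join (x : R) :
    (forall i : 'I_k.+1, (n i - 1)%:R * Num.sqrt 2 * (d i)%:R < x) ->
  \det (x%:M - sombor_mx R star_join) =
  \prod_(i < k.+1) (x + Num.sqrt 2 * (d i)%:R) ^+ (n i - 1) *
  (\prod_(i < k.+1) (x - (n i - 1)%:R * Num.sqrt 2 * (d i)%:R) -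
   \sum_(1 <= j < k.+1) (n 0%N * n j * (d 0%N ^ 2 + d j ^ 2))%:R *
     \prod_(1 <= i < k.+1 | i != j) (x - (n i - 1)%:R * Num.sqrt 2 * (d i)%:R)).
Proof.
move=> x_gt.
pose y (i : 'I_k.+1) := x + Num.sqrt 2 * (d i)%:R.
pose a (i : 'I_k.+1) := x - (n i - 1)%:R * Num.sqrt 2 * (d i)%:R.
have y_neq0 i : y i != 0.
  have e_ge0 : 0 <= (n i - 1)%:R * Num.sqrt 2 * (d i)%:R :> R.
    by rewrite -mulrA !mulr_ge0 ?sqrtr_ge0.
  by rewrite lt0r_neq0 // ltr_wpDr ?mulr_ge0 ?sqrtr_ge0 // (le_lt_trans e_ge0 (x_gt i)).
have a_neq0 i : a i != 0 by rewrite lt0r_neq0 // subr_gt0.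
have one_subE (i : 'I_k.+1) : 1 - (n i)%:R / y i * Q i i = a i / y i.
  by rewrite star_quotient_diag /a /y natrB ?n_gt0 //; field; apply: y_neq0.
rewrite det_sombor_star_join_quotient //.
rewrite (det_star_quotient _ (fun i => a i / y i)) => [|i|i _]; last 2 first.
- exact: one_subE.
- by rewrite mulf_neq0 ?invr_neq0.
have sumE : \sum_(i < k.+1 | i != ord0)
      (n 0%N)%:R / y ord0 * ((n i)%:R / y i) * (d 0%N ^ 2 + d i ^ 2)%:R / (a i / y i) =
    (\sum_(i < k.+1 | i != ord0) (n 0%N * n i * (d 0%N ^ 2 + d i ^ 2))%:R / a i) / y ord0.
  rewrite mulr_suml; apply: eq_bigr => i _; rewrite !natrM; field.
  by rewrite !y_neq0 a_neq0.
have prodE : \prod_i y i ^+ n i = \prod_i y i ^+ (n i - 1) * \prod_i y i.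
  by rewrite -big_split; apply: eq_bigr => i _ /=; rewrite -exprSr subn1 prednK ?n_gt0.
have Py_neq0 : \prod_(i | i != ord0) y i != 0 by apply/prodf_neq0 => i _.
rewrite sumE prodE [\prod_i y i](bigD1 ord0) //= prodf_div.
transitivity (\prod_i y i ^+ (n i - 1) *
  ((a ord0 - \sum_(i < k.+1 | i != ord0) (n 0%N * n i * (d 0%N ^ 2 + d i ^ 2))%:R / a i) *
   \prod_(i | i != ord0) a i)).
  by field; rewrite y_neq0 Py_neq0.
rewrite mulr_sub_sum_div_prod //; congr (_ * (_ - _)).
  by rewrite [RHS](bigD1 ord0).
rewrite big_nat1_ord; apply: eq_big => [j|j _]; first by rewrite andbT.
by rewrite big_nat1_ord.
Qed.

End StarJoin.

Theorem corollary3p5 (R : realType) (k : nat) (n : nat -> nat) :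
  (2 <= k)%N -> (forall i, (i < k)%N -> (1 <= n i)%N) ->
  let N := (\sum_(i < k) n i)%N in
  let d := fun i : nat => if i == 0%N then (N - 1)%N else (n 0%N + n i - 1)%N in
  let s2 : R := Num.sqrt 2 in
  char_poly (sombor_mx R (@gjoin_adj k (@star_adj k) (fun i : 'I_k => 'I_(n i))
                                   (fun i => @complete_adj (n i)))) =
  (\prod_(i < k) ('X + (s2 * (d i)%:R)%:P) ^+ (n i - 1)) *
  (\prod_(i < k) ('X - ((n i - 1)%:R * s2 * (d i)%:R)%:P)
   - \sum_(1 <= j < k)
       ((n 0%N * n j * (d 0%N ^ 2 + d j ^ 2))%:R)%:P *
       \prod_(1 <= i < k | i != j) ('X - ((n i - 1)%:R * s2 * (d i)%:R)%:P)).
Proof.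
case: k => [//|k] _ n_gt0 N d s2.
pose e (i : 'I_k.+1) : R := (n i - 1)%:R * s2 * (d i)%:R.
apply: (@poly_eq_gt _ _ _ (\sum_i e i)) => x x_gt.
have e_lt_x i : e i < x.
  apply: le_lt_trans x_gt; rewrite (bigD1 i) //= lerDl sumr_ge0 // => j _.
  by rewrite !mulr_ge0 ?sqrtr_ge0.
rewrite horner_char_poly hornerM hornerD hornerN horner_sum !horner_prod.
under eq_bigr do rewrite !hornerE.
under [X in _ * (X - _)]eq_bigr do rewrite !hornerE.
under [X in _ * (_ - X)]eq_bigr => j _.
  by rewrite hornerM hornerC horner_prod; under eq_bigr do rewrite !hornerE; over.
exact: det_sombor_star_join.
Qed.
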